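(* Assume $\Phi_h=M_h=\mathbb{P}_1$. Then any solution $(\phi^{n+1},\mu^{n+1})$ of the J$_\varepsilon$-scheme satisfies $$\int_\Omega\big(I_h(\phi^{n+1}_-)\big)^2d\boldsymbol x\le C\sqrt{\varepsilon(1-\varepsilon)}\le C\sqrt{\varepsilon}\quad\text{and}\quad\int_\Omega\Big(I_h\big((\phi^{n+1}-1)_+\big)\Big)^2d\boldsymbol x\le C\sqrt{\varepsilon(1-\varepsilon)}\le C\sqrt{\varepsilon},$$ where $C$ depends on the initial energy $E(\phi^0)$ and on $\int_\Omega I_h(J_\varepsilon(\phi^0))\,d\boldsymbol x$.
   Context: $\Omega\subset\mathbb{R}^d$ ($d=1,2,3$) bounded, $\eta>0$, $\varepsilon\in(0,1/2)$. $f_-=\min\{f,0\}$, $f_+=\max\{f,0\}$. $F(\phi)=\frac1{4\eta^2}\phi^2(\phi-1)^2=F_c+F_e$ with $F_c(\phi)=\frac1{4\eta^2}(\phi^4-2\phi^3+\frac32\phi^2)$, $F_e(\phi)=-\frac1{8\eta^2}\phi^2$; $E(\phi)=\int_\Omega(\frac12|\nabla\phi|^2+F(\phi))d\boldsymbol x$. The interval $[0,T]$ is split into $N$ steps of size $\Delta t=T/N$, $n=0,\dots,N-1$. $\mathcal T_h$ is a structured triangulation of $\Omega$ in which every element $I$ has vertices $\boldsymbol x_0,\dots,\boldsymbol x_d$ with $\boldsymbol x_k-\boldsymbol x_0$ parallel to the $k$-th coordinate axis; $\Phi_h=M_h$ is the space of continuous piecewise $\mathbb{P}_1$ functions. $I_h$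 is nodal $\mathbb{P}_1$ interpolation, $(f,g)_h=\int_\Omega I_h(fg)\,d\boldsymbol x$, $(\cdot,\cdot)$ the $L^2$ product. $J(\phi)=(1-2\phi)\arcsin(\sqrt{1-\phi})+\sqrt{(1-\phi)\phi}+2\arcsin(\sqrt{1/2})\,\phi$ on $[0,1]$ (so $J''(\phi)=1/\sqrt{\phi(1-\phi)}$); $J_\varepsilon\in C^2(\mathbb{R})$ equals $J$ on $[\varepsilon,1-\varepsilon]$ and its second-order Taylor polynomial at $\varepsilon$ (resp. $1-\varepsilon$) for $\phi<\varepsilon$ (resp. $\phi>1-\varepsilon$). For $\phi\in\Phi_h$, $M^J_\varepsilon(\phi)$ is the piecewise constant diagonal matrix whose $k$-th entry on $I$ is $\Big(\frac{\phi(\boldsymbol x_k)-\phi(\boldsymbol x_0)}{J_\varepsilon'(\phi(\boldsymbol x_k))-J_\varepsilon'(\phi(\boldsymbol x_0))}\Big)^2$ if $\phi(\boldsymbol x_k)\neq\phi(\boldsymbol x_0)$ and $\big(1/J_\varepsilon''(\phi(\boldsymbol x_0))\big)^2$ otherwise. J$_\varepsilon$-scheme: given $\phi^n\in\Phi_h$ (starting from $\phi^0\in\Phi_h$), find $(\phi^{n+1},\mu^{n+1})\in\Phi_h\times M_h$ such that for all $(\bar\phi,\bar\mu)\in\Phi_h\times M_h$: $\frac1{\Delta t}(\phi^{n+1}-\phi^n,\bar\mu)_h+(M^J_\varepsilon(\phi^{n+1})\nabla\mu^{n+1},\nabla\bar\mu)=0$ and $(\nabla\phi^{n+1},\nabla\bar\phi)+(F_c'(\phi^{n+1})+F_e'(\phi^n),\bar\phi)=(\mu^{n+1},\bar\phi)_h$.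 *)

From Stdlib Require Import Reals Lra Lia.
From Coquelicot Require Import Coquelicot.
Open Scope R_scope.

Fixpoint rsum (n : nat) (f : nat -> R) : R :=
  match n with O => 0 | S m => rsum m f + f m end.
Fixpoint rprod (n : nat) (f : nat -> R) : R :=
  match n with O => 1 | S m => rprod m f * f m end.

(* Points of R^d are functions  nat -> R  (only coordinates 0..d-1 matter).
   node i c     : c-th coordinate of global node i  (i < nnodes)
   vtx e k      : global index of the k-th vertex x_k (k = 0..d) of element e
                  (e < nelems). *)
Record smesh (d : nat) : Type := SMesh {
  nnodes : nat;
  node : nat -> nat -> R;
  nelems : nat;
  vtx : nat -> nat -> nat }.
Arguments nnodes {d}. Arguments node {d}. Arguments nelems {d}. Arguments vtx {d}.

Section Mesh.
Context {d : nat} (M : smesh d).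

(* signed edge length  x_k - x_0  along the k-th axis (axis index k-1), k = 1..d *)
Definition step (e k : nat) : R :=
  node M (vtx M e k) (k - 1)%nat - node M (vtx M e 0%nat) (k - 1)%nat.

Definition is_vtx (e i : nat) : Prop := exists k, (k <= d)%nat /\ vtx M e k = i.

Definition in_elem (e : nat) (x : nat -> R) : Prop :=
  exists l : nat -> R, (forall k, (k <= d)%nat -> 0 <= l k) /\
    rsum (S d) l = 1 /\
    forall c, (c < d)%nat -> x c = rsum (S d) (fun k => l k * node M (vtx M e k) c).

Definition in_common_face (e1 e2 : nat) (x : nat -> R) : Prop :=
  exists l : nat -> R,
    (forall i, (i < nnodes M)%nat -> 0 <= l i) /\
    (forall i, (i < nnodes M)%nat -> l i <> 0 -> is_vtx e1 i /\ is_vtx e2 i) /\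
    rsum (nnodes M) l = 1 /\
    forall c, (c < d)%nat -> x c = rsum (nnodes M) (fun i => l i * node M i c).

(* Conforming structured triangulation: every element I has vertices
   x_0,...,x_d with x_k - x_0 parallel to the k-th coordinate axis (and nonzero);
   nodes are pairwise distinct and each is a vertex of some element;
   distinct elements are distinct simplices meeting face-to-face
   (their intersection is the convex hull of their common vertices). *)
Definition valid_mesh : Prop :=
  (forall e k, (e < nelems M)%nat -> (k <= d)%nat -> (vtx M e k < nnodes M)%nat) /\
  (forall e k, (e < nelems M)%nat -> (1 <= k <= d)%nat ->
      step e k <> 0 /\
      forall c, (c < d)%nat -> c <> (k - 1)%nat ->
        node M (vtx M e k) c = node M (vtx M e 0%nat) c) /\
  (forall i j, (i < nnodes M)%nat -> (j < nnodes M)%nat ->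
      (forall c, (c < d)%nat -> node M i c = node M j c) -> i = j) /\
  (forall i, (i < nnodes M)%nat -> exists e, (e < nelems M)%nat /\ is_vtx e i) /\
  (forall e1 e2, (e1 < nelems M)%nat -> (e2 < nelems M)%nat -> e1 <> e2 ->
      (exists k, (k <= d)%nat /\ ~ is_vtx e2 (vtx M e1 k)) /\
      (forall x, in_elem e1 x -> in_elem e2 x -> in_common_face e1 e2 x)).

(* Phi_h = M_h = continuous P1: a function is given by its nodal values
   v : nat -> R  (v i = value at global node i).                        *)

Definition loc (v : nat -> R) (e k : nat) : R := v (vtx M e k).

(* (constant) gradient of the P1 function v on element e, component c < d *)
Definition grad (v : nat -> R) (e c : nat) : R :=
  (loc v e (S c) - loc v e 0%nat) / step e (S c).

Definition p1 (v : nat -> R) (e : nat) (x : nat -> R) : R :=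
  loc v e 0%nat + rsum d (fun c => grad v e c * (x c - node M (vtx M e 0%nat) c)).

(* Integration.  sint m G r = integral of G over {t in R^m : t >= 0, sum t <= r}
   (iterated Riemann integrals). *)
Fixpoint sint (m : nat) (G : (nat -> R) -> R) (r : R) {struct m} : R :=
  match m with
  | O => G (fun _ => 0)
  | S m' => RInt (fun u =>
        sint m' (fun t => G (fun i => match i with O => u | S i' => t i' end)) (r - u))
        0 r
  end.

(* affine map of the reference simplex onto element e *)
Definition aff (e : nat) (t : nat -> R) : nat -> R :=
  fun c => node M (vtx M e 0%nat) c + t c * step e (S c).

(* integral over element e (change of variables to the reference simplex) *)
Definition elem_int (e : nat) (g : (nat -> R) -> R) : R :=
  Rabs (rprod d (fun c => step e (S c))) * sint d (fun t => g (aff e t)) 1.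

(* integral over Omega = union of the elements of a piecewise defined function:
   g e x is the function on element e *)
Definition omega_int (g : nat -> (nat -> R) -> R) : R :=
  rsum (nelems M) (fun e => elem_int e (g e)).

(* (f,g)_h = int_Omega I_h(f g) for nodal values f, g *)
Definition lumped (f g : nat -> R) : R :=
  omega_int (fun e x => p1 (fun i => f i * g i) e x).

End Mesh.

Definition Fpot (eta p : R) : R := / (4 * eta ^ 2) * p ^ 2 * (p - 1) ^ 2.
(* F_c'(p) and F_e'(p): derivatives of
   F_c = (p^4 - 2p^3 + 3/2 p^2)/(4 eta^2),  F_e = - p^2 / (8 eta^2) *)
Definition dFc (eta p : R) : R := / (4 * eta ^ 2) * (4 * p ^ 3 - 6 * p ^ 2 + 3 * p).
Definition dFe (eta p : R) : R := - / (4 * eta ^ 2) * p.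

Definition energy {d} (M : smesh d) (eta : R) (phi : nat -> R) : R :=
  omega_int M (fun e x =>
    / 2 * rsum d (fun c => grad M phi e c ^ 2) + Fpot eta (p1 M phi e x)).

Definition Jfun (p : R) : R :=
  (1 - 2 * p) * asin (sqrt (1 - p)) + sqrt ((1 - p) * p) + 2 * asin (sqrt (/ 2)) * p.

Definition Jeps (eps p : R) : R :=
  if Rlt_dec p eps then
    Jfun eps + Derive Jfun eps * (p - eps) + / 2 * Derive (Derive Jfun) eps * (p - eps) ^ 2
  else if Rlt_dec (1 - eps) p then
    Jfun (1 - eps) + Derive Jfun (1 - eps) * (p - (1 - eps))
      + / 2 * Derive (Derive Jfun) (1 - eps) * (p - (1 - eps)) ^ 2
  else Jfun p.

Definition dJeps (eps : R) : R -> R := Derive (Jeps eps).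
Definition ddJeps (eps : R) : R -> R := Derive (Derive (Jeps eps)).

(* diagonal entry c (axis c, i.e. vertex k = c+1) of M^J_eps(phi) on element e *)
Definition MJ {d} (M : smesh d) (eps : R) (phi : nat -> R) (e c : nat) : R :=
  let a := loc M phi e (S c) in
  let b := loc M phi e 0%nat in
  if Req_dec_T a b then (/ ddJeps eps b) ^ 2
  else ((a - b) / (dJeps eps a - dJeps eps b)) ^ 2.

Definition Jscheme {d} (M : smesh d) (eta eps dt : R) (phi0 phi1 mu1 : nat -> R) : Prop :=
  (forall mub : nat -> R,
     / dt * lumped M (fun i => phi1 i - phi0 i) mub
     + omega_int M (fun e _ =>
         rsum d (fun c => MJ M eps phi1 e c * grad M mu1 e c * grad M mub e c)) = 0) /\
  (forall phib : nat -> R,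
     omega_int M (fun e _ => rsum d (fun c => grad M phi1 e c * grad M phib e c))
     + omega_int M (fun e x =>
         (dFc eta (p1 M phi1 e x) + dFe eta (p1 M phi0 e x)) * p1 M phib e x)
     = lumped M mu1 phib).

(* Testing the scheme with [mu^(k+1)] and [phi^(k+1) - phi^k] and splitting [F] into its convex
   part [F_c] and concave part [F_e] gives the discrete energy law
   [E(phi^(k+1)) + dt D_(k+1) <= E(phi^k)], with [D = (M^J grad mu, grad mu)].  Testing instead
   with [J_eps'(phi^(k+1))], convexity of [J_eps] and the identity
   [(M^J grad J_eps'(phi))^2 = M^J |grad phi|^2] (which is what [M^J] is built for) bound the
   growth of the entropy [S(phi) = int I_h J_eps(phi)] by [dt (D_(k+1) / 2 + E(phi^(k+1)))].
   Summing over the steps, [S(phi^(n+1)) <= S(phi^0) + (1/2 + T) E(phi^0)].  Outside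
   [[eps, 1 - eps]] the function [J_eps] is a parabola of curvature [1 / sqrt(eps (1 - eps))]
   above its tangent at the junction, which is nonnegative there; hence
   [phi_-^2 <= 2 sqrt(eps (1 - eps)) J_eps(phi)], and Jensen's inequality for the convex
   combination defining a P1 function gives [(I_h phi_-)^2 <= I_h (phi_-^2)].
   The integrals are iterated Riemann integrals; all integrands are polynomial on each element,
   and integrating a polynomial over the simplex [{t >= 0, sum t <= r}] yields a polynomial in
   [r], which provides the integrability needed for linearity and monotonicity. *)

From Stdlib Require Import Reals Lra Lia FunctionalExtensionality.
From Coquelicot Require Import Coquelicot.
Open Scope R_scope.

Lemma rsum_ext n f g : (forall i, (i < n)%nat -> f i = g i) -> rsum n f = rsum n g.
Proof. induction n as [|n IH]; intros H; simpl; auto. rewrite IH, H; auto. Qed.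

Lemma rsum_add n f g : rsum n (fun i => f i + g i) = rsum n f + rsum n g.
Proof. induction n as [|n IH]; simpl; [ring | rewrite IH; ring]. Qed.

Lemma rsum_scal n c f : rsum n (fun i => c * f i) = c * rsum n f.
Proof. induction n as [|n IH]; simpl; [ring | rewrite IH; ring]. Qed.

Lemma rsum_le n f g : (forall i, (i < n)%nat -> f i <= g i) -> rsum n f <= rsum n g.
Proof. induction n as [|n IH]; intros H; simpl; [lra | apply Rplus_le_compat; auto]. Qed.

Lemma rsum_nonneg n f : (forall i, (i < n)%nat -> 0 <= f i) -> 0 <= rsum n f.
Proof. induction n as [|n IH]; intros H; simpl; [lra | apply Rplus_le_le_0_compat; auto]. Qed.

Definition scons (u : R) (t : nat -> R) : nat -> R :=
  fun i => match i with O => u | S i' => t i' end.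

Lemma rsum_scons n f : rsum (S n) f = f O + rsum n (fun i => f (S i)).
Proof. induction n as [|n IH]; simpl in *; [ring | rewrite IH; ring]. Qed.

(** * Polynomial integrands *)

Inductive poly_fun : ((nat -> R) -> R) -> Prop :=
| poly_const c : poly_fun (fun _ => c)
| poly_var i : poly_fun (fun t => t i)
| poly_add G H : poly_fun G -> poly_fun H -> poly_fun (fun t => G t + H t)
| poly_mul G H : poly_fun G -> poly_fun H -> poly_fun (fun t => G t * H t)
| poly_opp G : poly_fun G -> poly_fun (fun t => - G t).

Lemma poly_sub G H : poly_fun G -> poly_fun H -> poly_fun (fun t => G t - H t).
Proof. intros; apply (poly_add G (fun t => - H t)); auto using poly_opp. Qed.

Lemma poly_pow G n : poly_fun G -> poly_fun (fun t => G t ^ n).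
Proof.
  intros HG; induction n as [|n IH]; simpl; [apply poly_const | apply (poly_mul G); auto].
Qed.

Lemma poly_rsum n F : (forall c, poly_fun (F c)) -> poly_fun (fun t => rsum n (fun c => F c t)).
Proof.
  intros HF; induction n as [|n IH]; simpl; [apply poly_const | apply (poly_add _ (F n)); auto].
Qed.

Lemma poly_div_const G c : poly_fun G -> poly_fun (fun t => G t / c).
Proof. intros; apply (poly_mul G (fun _ => / c)); auto using poly_const. Qed.

Ltac solve_poly :=
  repeat first [ apply poly_const | apply poly_var | apply poly_rsum; intro
               | apply poly_sub | apply poly_add | apply poly_mul | apply poly_opp
               | apply poly_pow | apply poly_div_const ].

Inductive poly_in_head : (R -> (nat -> R) -> R) -> Prop :=
| head_monom k G : poly_fun G -> poly_in_head (fun u t => u ^ k * G t)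
| head_add H1 H2 : poly_in_head H1 -> poly_in_head H2 ->
    poly_in_head (fun u t => H1 u t + H2 u t).

Lemma poly_in_head_ext H H' :
  poly_in_head H -> (forall u t, H u t = H' u t) -> poly_in_head H'.
Proof.
  intros HH E. replace H' with H; auto.
  do 2 (apply functional_extensionality; intro). apply E.
Qed.

Lemma poly_in_head_slice H u : poly_in_head H -> poly_fun (H u).
Proof.
  induction 1.
  - apply (poly_mul (fun _ => u ^ k)); auto using poly_const.
  - apply (poly_add (H1 u)); auto.
Qed.

Lemma poly_in_head_mul H1 H2 : poly_in_head H1 -> poly_in_head H2 ->
  poly_in_head (fun u t => H1 u t * H2 u t).
Proof.
  intros P1 P2. induction P1 as [k G HG|H1 H1' _ IH1 _ IH1'].
  - induction P2 as [l K HK|H2 H2' _ IH2 _ IH2'].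
    + apply (poly_in_head_ext (fun u t => u ^ (k + l) * (G t * K t))).
      { apply head_monom, poly_mul; auto. }
      intros; rewrite pow_add; ring.
    + eapply poly_in_head_ext; [apply (head_add _ _ IH2 IH2')|]. intros; cbv beta; ring.
  - eapply poly_in_head_ext; [apply (head_add _ _ IH1 IH1')|]. intros; cbv beta; ring.
Qed.

Lemma poly_in_head_const (c : R) : poly_in_head (fun _ _ => c).
Proof.
  apply (poly_in_head_ext (fun u _ => u ^ 0 * c)); [apply head_monom, poly_const|].
  intros; simpl; ring.
Qed.

Lemma poly_in_head_scons G : poly_fun G -> poly_in_head (fun u t => G (scons u t)).
Proof.
  induction 1 as [c|[|i]| | |G _ IH].
  - apply poly_in_head_const.
  - apply (poly_in_head_ext (fun u _ => u ^ 1 * 1)); [apply head_monom, poly_const|].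
    intros; simpl; ring.
  - apply (poly_in_head_ext (fun u t => u ^ 0 * t i)); [apply head_monom, poly_var|].
    intros; simpl; ring.
  - apply head_add; auto.
  - apply poly_in_head_mul; auto.
  - apply (poly_in_head_ext (fun u t => (-1) * G (scons u t))).
    { apply poly_in_head_mul; auto using poly_in_head_const. }
    intros; ring.
Qed.

Lemma poly_fun_scons G u : poly_fun G -> poly_fun (fun t => G (scons u t)).
Proof.
  intros HG. apply (poly_in_head_slice (fun u t => G (scons u t))), poly_in_head_scons; auto.
Qed.

Inductive upoly : (R -> R) -> Prop :=
| upoly_monom c N : upoly (fun s => c * s ^ N)
| upoly_add f g : upoly f -> upoly g -> upoly (fun s => f s + g s).

Lemma upoly_ext f g : upoly f -> (forall s, f s = g s) -> upoly g.
Proof. intros Hf E. replace g with f; auto. apply functional_extensionality, E. Qed.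

Lemma upoly_continuous f : upoly f -> forall x, continuous f x.
Proof.
  induction 1; intros x.
  - apply (ex_derive_continuous (fun s => c * s ^ N)). auto_derive; auto.
  - apply (continuous_plus f g); auto.
Qed.

Lemma continuous_pow_mul_shift (a : nat) (f : R -> R) r x : (forall y, continuous f y) ->
  continuous (fun u => u ^ a * f (r - u)) x.
Proof.
  intros Hf. apply (continuous_mult (fun u => u ^ a) (fun u => f (r - u))).
  - apply (ex_derive_continuous (fun u => u ^ a)); auto_derive; auto.
  - apply (continuous_comp (fun u => r - u) f); auto.
    apply (ex_derive_continuous (fun u => r - u)); auto_derive; auto.
Qed.

Lemma ex_RInt_continuous_R (f : R -> R) a b : (forall x, continuous f x) -> ex_RInt f a b.
Proof. intros H; apply (ex_RInt_continuous (V := R_CompleteNormedModule)); auto. Qed.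

(* The Beta integral [int_0^s u^a (s-u)^N du = s^(a+N+1) B(a+1,N+1)], via [u = s v]. *)
Lemma upoly_convolution_pow q (a : nat) : upoly q ->
  upoly (fun s => RInt (fun u => u ^ a * q (s - u)) 0 s).
Proof.
  induction 1 as [c N|f g Hf IHf Hg IHg].
  - set (B := RInt (fun v => v ^ a * (1 - v) ^ N) 0 1).
    apply (upoly_ext (fun s => (c * B) * s ^ (a + N + 1))); [apply upoly_monom|]. intros s.
    assert (E := RInt_comp_lin (fun u => u ^ a * (c * (s - u) ^ N)) s 0 0 1).
    replace (s * 0 + 0) with 0 in E by ring. replace (s * 1 + 0) with s in E by ring.
    rewrite <- E by (apply ex_RInt_continuous_R; intros;
                     apply (ex_derive_continuous (V := R_NormedModule)); auto_derive; auto).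
    rewrite (RInt_ext (V := R_CompleteNormedModule) _
               (fun v => scal (s ^ (a + N + 1) * c) (v ^ a * (1 - v) ^ N))).
    + rewrite (RInt_scal (V := R_CompleteNormedModule)).
      * change (c * B * s ^ (a + N + 1) = s ^ (a + N + 1) * c * B). ring.
      * apply ex_RInt_continuous_R; intros;
          apply (ex_derive_continuous (V := R_NormedModule)); auto_derive; auto.
    + intros v _.
      change (s * ((s * v + 0) ^ a * (c * (s - (s * v + 0)) ^ N))
              = s ^ (a + N + 1) * c * (v ^ a * (1 - v) ^ N)).
      replace (s - (s * v + 0)) with (s * (1 - v)) by ring.
      replace (s * v + 0) with (s * v) by ring.
      rewrite !Rpow_mult_distr, !pow_add. ring.
  - apply (upoly_ext _ _ (upoly_add _ _ IHf IHg)). intros s. cbv beta.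
    rewrite (RInt_ext (fun u => u ^ a * (f (s - u) + g (s - u)))
               (fun u => plus (u ^ a * f (s - u)) (u ^ a * g (s - u))))
      by (intros; unfold plus; simpl; ring).
    rewrite (RInt_plus (V := R_CompleteNormedModule)); auto; apply ex_RInt_continuous_R; intros;
      apply continuous_pow_mul_shift, upoly_continuous; auto.
Qed.

Lemma sint_S m G r :
  sint (S m) G r = RInt (fun u => sint m (fun t => G (scons u t)) (r - u)) 0 r.
Proof. reflexivity. Qed.

Section Slices.
Variable m : nat.
Hypothesis sint_add_m : forall G H r, poly_fun G -> poly_fun H ->
  sint m (fun t => G t + H t) r = sint m G r + sint m H r.
Hypothesis sint_scal_m : forall G c r, poly_fun G ->
  sint m (fun t => c * G t) r = c * sint m G r.
Hypothesis sint_upoly_m : forall G, poly_fun G -> upoly (sint m G).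

Lemma slice_continuous H r x : poly_in_head H ->
  continuous (fun u => sint m (H u) (r - u)) x.
Proof.
  intros HH; revert x; induction HH as [k G HG|H1 H2 P1 IH1 P2 IH2]; intros x.
  - apply (continuous_ext (fun u => u ^ k * sint m G (r - u))).
    + intros u; symmetry; apply sint_scal_m; auto.
    + apply continuous_pow_mul_shift; intros; apply upoly_continuous; auto.
  - apply (continuous_ext (fun u => sint m (H1 u) (r - u) + sint m (H2 u) (r - u))).
    + intros u; symmetry; apply sint_add_m; apply poly_in_head_slice; auto.
    + apply (continuous_plus (fun u => sint m (H1 u) (r - u))); auto.
Qed.

Lemma slice_ex_RInt H r a b : poly_in_head H ->
  ex_RInt (fun u => sint m (H u) (r - u)) a b.
Proof. intros; apply ex_RInt_continuous_R; intros; apply slice_continuous; auto. Qed.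

Lemma slice_integral_upoly H : poly_in_head H ->
  upoly (fun r => RInt (fun u => sint m (H u) (r - u)) 0 r).
Proof.
  induction 1 as [k G HG|H1 H2 P1 IH1 P2 IH2].
  - apply (upoly_ext _ _ (upoly_convolution_pow _ k (sint_upoly_m G HG))). intros r.
    apply RInt_ext; intros u _. symmetry; apply sint_scal_m; auto.
  - apply (upoly_ext _ _ (upoly_add _ _ IH1 IH2)). intros r. cbv beta.
    rewrite <- (RInt_plus (V := R_CompleteNormedModule)) by (apply slice_ex_RInt; auto).
    apply RInt_ext; intros u _. symmetry; apply sint_add_m; apply poly_in_head_slice; auto.
Qed.

End Slices.

Lemma sint_linear_upoly m :
  (forall G H r, poly_fun G -> poly_fun H ->
     sint m (fun t => G t + H t) r = sint m G r + sint m H r) /\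
  (forall G c r, poly_fun G -> sint m (fun t => c * G t) r = c * sint m G r) /\
  (forall G, poly_fun G -> upoly (sint m G)).
Proof.
  induction m as [|m [IHadd [IHscal IHupoly]]].
  - split; [|split]; try reflexivity.
    intros G _. apply (upoly_ext (fun s => G (fun _ => 0) * s ^ 0)); [apply upoly_monom|].
    intros; simpl; ring.
  - assert (Ex : forall G r, poly_fun G ->
                   ex_RInt (fun u => sint m (fun t => G (scons u t)) (r - u)) 0 r).
    { intros G r HG. apply (slice_ex_RInt m IHadd IHscal IHupoly (fun u t => G (scons u t))).
      apply poly_in_head_scons; auto. }
    split; [|split].
    + intros G H r HG HH. rewrite !sint_S.
      rewrite <- (RInt_plus (V := R_CompleteNormedModule)) by auto.
      apply RInt_ext; intros u _. apply IHadd; apply poly_fun_scons; auto.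
    + intros G c r HG. rewrite !sint_S.
      rewrite <- (RInt_scal (V := R_CompleteNormedModule)) by auto.
      apply RInt_ext; intros u _. apply IHscal, poly_fun_scons; auto.
    + intros G HG. apply (slice_integral_upoly m IHadd IHscal IHupoly (fun u t => G (scons u t))).
      apply poly_in_head_scons; auto.
Qed.

Lemma ex_RInt_sint_slice m G r : poly_fun G ->
  ex_RInt (fun u => sint m (fun t => G (scons u t)) (r - u)) 0 r.
Proof.
  intros HG. destruct (sint_linear_upoly m) as [Hadd [Hscal Hup]].
  apply (slice_ex_RInt m Hadd Hscal Hup (fun u t => G (scons u t))), poly_in_head_scons; auto.
Qed.

Lemma sint_add m G H r : poly_fun G -> poly_fun H ->
  sint m (fun t => G t + H t) r = sint m G r + sint m H r.
Proof. apply sint_linear_upoly. Qed.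

Lemma sint_scal m G c r : poly_fun G -> sint m (fun t => c * G t) r = c * sint m G r.
Proof. apply sint_linear_upoly. Qed.

Definition in_simplex (m : nat) (r : R) (t : nat -> R) : Prop :=
  (forall i, (i < m)%nat -> 0 <= t i) /\ rsum m t <= r.

Lemma in_simplex_scons m r u t :
  0 <= u -> in_simplex m (r - u) t -> in_simplex (S m) r (scons u t).
Proof.
  intros Hu [Ht Hs]. split.
  - intros [|i] Hi; simpl; [lra | apply Ht; lia].
  - rewrite rsum_scons. change (u + rsum m t <= r). lra.
Qed.

Lemma sint_le m G H r : 0 <= r -> poly_fun G -> poly_fun H ->
  (forall t, in_simplex m r t -> G t <= H t) -> sint m G r <= sint m H r.
Proof.
  revert G H r; induction m as [|m IH]; intros G H r Hr HG HH Hle.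
  - apply Hle. split; simpl; [intros; lia | lra].
  - rewrite !sint_S. apply RInt_le; auto using ex_RInt_sint_slice.
    intros u Hu. apply IH; auto using poly_fun_scons; [lra|].
    intros t Ht. apply Hle, in_simplex_scons; auto; lra.
Qed.

Lemma rsum_sqr_le n w x : (forall i, (i < n)%nat -> 0 <= w i) -> rsum n w = 1 ->
  (rsum n (fun i => w i * x i)) ^ 2 <= rsum n (fun i => w i * x i ^ 2).
Proof.
  intros Hw H1. set (B := rsum n (fun i => w i * x i)).
  assert (Hvar : 0 <= rsum n (fun i => w i * (x i - B) ^ 2)).
  { apply rsum_nonneg; intros i Hi. apply Rmult_le_pos; auto using pow2_ge_0. }
  rewrite (rsum_ext n _ (fun i => (w i * x i ^ 2 + (-2 * B) * (w i * x i)) + B ^ 2 * w i))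
    in Hvar by (intros; ring).
  rewrite !rsum_add, !rsum_scal, H1 in Hvar. fold B in Hvar. nra.
Qed.

(** * Integrals over the mesh and P1 interpolation *)

Section Mesh.
Context {d : nat} (M : smesh d).

Definition poly_on_elems (g : nat -> (nat -> R) -> R) : Prop :=
  forall e, poly_fun (fun t => g e (aff M e t)).

Lemma omega_int_add f g : poly_on_elems f -> poly_on_elems g ->
  omega_int M (fun e x => f e x + g e x) = omega_int M f + omega_int M g.
Proof.
  intros Hf Hg. unfold omega_int. rewrite <- rsum_add. apply rsum_ext; intros e _.
  unfold elem_int. rewrite sint_add; auto. ring.
Qed.

Lemma omega_int_scal c f : poly_on_elems f ->
  omega_int M (fun e x => c * f e x) = c * omega_int M f.
Proof.
  intros Hf. unfold omega_int. rewrite <- rsum_scal. apply rsum_ext; intros e _.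
  unfold elem_int. rewrite sint_scal; auto. ring.
Qed.

Lemma omega_int_le f g : poly_on_elems f -> poly_on_elems g ->
  (forall e t, (e < nelems M)%nat -> in_simplex d 1 t -> f e (aff M e t) <= g e (aff M e t)) ->
  omega_int M f <= omega_int M g.
Proof.
  intros Hf Hg Hle. apply rsum_le; intros e He.
  apply Rmult_le_compat_l; [apply Rabs_pos|]. apply sint_le; auto; lra.
Qed.

Lemma omega_int_nonneg f : poly_on_elems f ->
  (forall e t, (e < nelems M)%nat -> in_simplex d 1 t -> 0 <= f e (aff M e t)) ->
  0 <= omega_int M f.
Proof.
  intros Hf H0.
  replace 0 with (omega_int M (fun e x => 0 * f e x)) by (rewrite omega_int_scal; auto; ring).
  apply omega_int_le; auto; intros e; [apply (poly_mul (fun _ => 0)); auto using poly_const|].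
  intros; rewrite Rmult_0_l; auto.
Qed.

Lemma grad_sub v w e c : grad M (fun i => v i - w i) e c = grad M v e c - grad M w e c.
Proof. unfold grad, loc, Rdiv. ring. Qed.

Lemma p1_add v w e x : p1 M (fun i => v i + w i) e x = p1 M v e x + p1 M w e x.
Proof.
  unfold p1.
  rewrite (rsum_ext d _ (fun c => grad M v e c * (x c - node M (vtx M e 0%nat) c) +
                                  grad M w e c * (x c - node M (vtx M e 0%nat) c)))
    by (intros; unfold grad, loc, Rdiv; ring).
  rewrite rsum_add. unfold loc; ring.
Qed.

Lemma p1_scal c v e x : p1 M (fun i => c * v i) e x = c * p1 M v e x.
Proof.
  unfold p1. rewrite Rmult_plus_distr_l, <- rsum_scal. f_equal.
  apply rsum_ext; intros; unfold grad, loc, Rdiv; ring.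
Qed.

Lemma p1_sub v w e x : p1 M (fun i => v i - w i) e x = p1 M v e x - p1 M w e x.
Proof.
  unfold Rminus. rewrite p1_add.
  replace (fun i => - w i) with (fun i => -1 * w i)
    by (apply functional_extensionality; intros; ring).
  rewrite p1_scal. ring.
Qed.

Definition bary (t : nat -> R) : nat -> R := scons (1 - rsum d t) t.

Lemma bary_sum t : rsum (S d) (bary t) = 1.
Proof. rewrite rsum_scons. unfold bary; simpl. change (1 - rsum d t + rsum d t = 1). ring. Qed.

Lemma bary_nonneg t k : in_simplex d 1 t -> (k < S d)%nat -> 0 <= bary t k.
Proof. intros [Ht Hs] Hk. destruct k; simpl; [lra | apply Ht; lia]. Qed.

Hypothesis HM : valid_mesh M.

Lemma p1_aff_bary v e t : (e < nelems M)%nat ->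
  p1 M v e (aff M e t) = rsum (S d) (fun k => bary t k * loc M v e k).
Proof.
  intros He. rewrite rsum_scons. unfold p1, bary; simpl.
  rewrite (rsum_ext d _ (fun c => t c * loc M v e (S c) + (- loc M v e 0%nat) * t c)).
  - rewrite rsum_add, rsum_scal. ring.
  - intros c Hc. destruct HM as [_ [Hstep _]].
    destruct (Hstep e (S c) He) as [Hnz _]; [lia|].
    unfold grad, aff. field. auto.
Qed.

Lemma p1_le v w e t : (e < nelems M)%nat -> in_simplex d 1 t -> (forall i, v i <= w i) ->
  p1 M v e (aff M e t) <= p1 M w e (aff M e t).
Proof.
  intros He Ht Hvw. rewrite !p1_aff_bary by auto.
  apply rsum_le; intros k Hk. apply Rmult_le_compat_l; [apply bary_nonneg; auto | apply Hvw].
Qed.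

Lemma p1_sqr_le v e t : (e < nelems M)%nat -> in_simplex d 1 t ->
  (p1 M v e (aff M e t)) ^ 2 <= p1 M (fun i => v i ^ 2) e (aff M e t).
Proof.
  intros He Ht. rewrite !p1_aff_bary by auto.
  apply rsum_sqr_le; [intros; apply bary_nonneg; auto | apply bary_sum].
Qed.

End Mesh.

(** * The entropy density [J] and its regularisation [J_eps] *)

Definition dJ (p : R) : R := 2 * (asin (sqrt (/ 2)) - asin (sqrt (1 - p))).
Definition ddJ (p : R) : R := / sqrt (p * (1 - p)).

Lemma asin_le_compat x y : -1 <= x -> x <= y -> y <= 1 -> asin x <= asin y.
Proof.
  intros Hx Hxy Hy. destruct (Rle_or_lt (asin x) (asin y)) as [H|H]; auto.
  pose proof (asin_bound x). pose proof (asin_bound y).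
  pose proof (sin_increasing_1 (asin y) (asin x)) as Hsin.
  rewrite !sin_asin in Hsin by lra. lra.
Qed.

Lemma asin_sqrt_1m_le x y : 0 <= x -> x <= y -> y <= 1 ->
  asin (sqrt (1 - y)) <= asin (sqrt (1 - x)).
Proof.
  intros. pose proof (sqrt_pos (1 - y)).
  apply asin_le_compat; [lra | apply sqrt_le_1_alt; lra |].
  apply Rle_trans with (sqrt 1); [apply sqrt_le_1_alt; lra | rewrite sqrt_1; lra].
Qed.

Lemma is_derive_asin y : -1 < y < 1 -> is_derive asin y (/ sqrt (1 - y ^ 2)).
Proof.
  intros H. apply is_derive_Reals, derive_pt_eq_1 with (derivable_pt_asin y H).
  rewrite derive_pt_asin. unfold Rsqr. replace (y ^ 2) with (y * y) by ring.
  field; apply Rgt_not_eq, sqrt_lt_R0; nra.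
Qed.

Lemma is_derive_asin_sqrt_1m p : 0 < p < 1 ->
  is_derive (fun q => asin (sqrt (1 - q))) p (- / (2 * sqrt p * sqrt (1 - p))).
Proof.
  intros Hp.
  assert (Q1 : 0 < sqrt (1 - p)) by (apply sqrt_lt_R0; lra).
  assert (Q2 : 0 < sqrt p) by (apply sqrt_lt_R0; lra).
  assert (Q3 : sqrt (1 - p) < 1).
  { pose proof (sqrt_lt_1_alt (1 - p) 1 ltac:(lra)) as X. rewrite sqrt_1 in X. exact X. }
  assert (Hsq : is_derive (fun q => sqrt (1 - q)) p (- / (2 * sqrt (1 - p)))).
  { auto_derive; [lra | unfold Rminus; ring]. }
  assert (Has : is_derive asin (sqrt (1 - p)) (/ sqrt p)).
  { replace (/ sqrt p) with (/ sqrt (1 - sqrt (1 - p) ^ 2)).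
    - apply is_derive_asin. lra.
    - rewrite pow2_sqrt by lra. do 2 f_equal. ring. }
  replace (- / (2 * sqrt p * sqrt (1 - p))) with (scal (- / (2 * sqrt (1 - p))) (/ sqrt p)).
  - exact (is_derive_comp asin (fun q => sqrt (1 - q)) p _ _ Has Hsq).
  - change (- / (2 * sqrt (1 - p)) * / sqrt p = - / (2 * sqrt p * sqrt (1 - p))). field. lra.
Qed.

Lemma is_derive_Jfun p : 0 < p < 1 -> is_derive Jfun p (dJ p).
Proof.
  (* Naming [A] makes [auto_derive] treat it as a black box with a known derivative. *)
  intros Hp. pose (A := fun q => asin (sqrt (1 - q))).
  assert (Ha : is_derive A p (- / (2 * sqrt p * sqrt (1 - p))))
    by (apply is_derive_asin_sqrt_1m; auto).
  assert (0 < sqrt p) by (apply sqrt_lt_R0; lra).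
  assert (0 < sqrt (1 - p)) by (apply sqrt_lt_R0; lra).
  apply (is_derive_ext
           (fun q => (1 - 2 * q) * A q + sqrt ((1 - q) * q) + 2 * asin (sqrt (/ 2)) * q));
    [reflexivity|].
  auto_derive.
  - repeat split; try nra. eexists; exact Ha.
  - change (Derive (fun x => A x) p) with (Derive A p). rewrite (is_derive_unique _ _ _ Ha).
    replace (1 + - p) with (1 - p) by ring. rewrite sqrt_mult by lra. unfold dJ, A. field. lra.
Qed.

Lemma is_derive_dJ p : 0 < p < 1 -> is_derive dJ p (ddJ p).
Proof.
  intros Hp. pose (A := fun q => asin (sqrt (1 - q))).
  assert (Ha : is_derive A p (- / (2 * sqrt p * sqrt (1 - p))))
    by (apply is_derive_asin_sqrt_1m; auto).
  assert (0 < sqrt p) by (apply sqrt_lt_R0; lra).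
  assert (0 < sqrt (1 - p)) by (apply sqrt_lt_R0; lra).
  apply (is_derive_ext (fun q => 2 * (asin (sqrt (/ 2)) - A q))); [reflexivity|].
  auto_derive.
  - eexists; exact Ha.
  - change (Derive (fun x => A x) p) with (Derive A p). rewrite (is_derive_unique _ _ _ Ha).
    unfold ddJ. rewrite sqrt_mult by lra. field. lra.
Qed.

Lemma Derive_Jfun p : 0 < p < 1 -> Derive Jfun p = dJ p.
Proof. intros; apply is_derive_unique, is_derive_Jfun; auto. Qed.

Lemma Derive_Derive_Jfun p : 0 < p < 1 -> Derive (Derive Jfun) p = ddJ p.
Proof.
  intros Hp. rewrite (Derive_ext_loc _ dJ).
  - apply is_derive_unique, is_derive_dJ; auto.
  - apply (locally_interval _ p (Finite 0) (Finite 1)); simpl; try lra.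
    intros; apply Derive_Jfun; lra.
Qed.

Lemma dJ_le_compat x y : 0 <= x -> x <= y -> y <= 1 -> dJ x <= dJ y.
Proof. intros. unfold dJ. pose proof (asin_sqrt_1m_le x y). lra. Qed.

Lemma dJ_half : dJ (/ 2) = 0.
Proof. unfold dJ. replace (1 - / 2) with (/ 2) by field. ring. Qed.

Lemma ddJ_pos p : 0 < p < 1 -> 0 < ddJ p.
Proof. intros. apply Rinv_0_lt_compat, sqrt_lt_R0. nra. Qed.

Lemma ddJ_1m p : ddJ (1 - p) = ddJ p.
Proof. unfold ddJ. do 2 f_equal. ring. Qed.

Lemma Jfun_nonneg p : 0 < p < 1 -> 0 <= Jfun p.
Proof.
  intros Hp. unfold Jfun. set (c := asin (sqrt (/ 2))). set (A := asin (sqrt (1 - p))).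
  pose proof (sqrt_pos ((1 - p) * p)).
  assert (Hzero : forall x, 0 <= x <= 1 -> 0 <= asin (sqrt (1 - x))).
  { intros x Hx. pose proof (asin_sqrt_1m_le x 1) as X.
    replace (1 - 1) with 0 in X by ring. rewrite sqrt_0, asin_0 in X. apply X; lra. }
  assert (Hc : 0 <= c).
  { unfold c. replace (/ 2) with (1 - / 2) at 1 by field. apply Hzero; lra. }
  assert (HA : 0 <= A) by (apply Hzero; lra).
  destruct (Rle_or_lt p (/ 2)).
  - assert (0 <= (1 - 2 * p) * A) by (apply Rmult_le_pos; lra). nra.
  - assert (A <= c).
    { unfold A, c. replace (/ 2) with (1 - / 2) at 1 by field. apply asin_sqrt_1m_le; lra. }
    nra.
Qed.

Definition taylor2 (a y : R) : R :=
  Jfun a + dJ a * (y - a) + / 2 * ddJ a * (y - a) ^ 2.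

Lemma is_derive_taylor2 a y : is_derive (taylor2 a) y (dJ a + ddJ a * (y - a)).
Proof. unfold taylor2. auto_derive; auto. field. Qed.

Lemma is_derive_glue (f f1 f2 : R -> R) (a b c y l : R) :
  b < y < c -> (forall z, b < z <= a -> f z = f1 z) -> (forall z, a <= z < c -> f z = f2 z) ->
  (y <= a -> is_derive f1 y l) -> (a <= y -> is_derive f2 y l) -> is_derive f y l.
Proof.
  intros Hy E1 E2 D1 D2. destruct (Rtotal_order y a) as [Hlt|[Heq|Hgt]].
  - apply (is_derive_ext_loc f1); [|apply D1; lra].
    apply (locally_interval _ y (Finite b) (Finite a)); simpl; try lra.
    intros; symmetry; apply E1; lra.
  - subst y. specialize (D1 (Rle_refl a)). specialize (D2 (Rle_refl a)).
    rewrite is_derive_Reals in *. intros e He.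
    destruct (D1 e He) as [d1 P1], (D2 e He) as [d2 P2].
    assert (Hm : 0 < Rmin (Rmin (a - b) (c - a)) (Rmin d1 d2)).
    { destruct d1, d2; simpl. repeat apply Rmin_glb_lt; lra. }
    exists (mkposreal _ Hm). simpl. intros h Hh0 Hh.
    pose proof (Rmin_l (Rmin (a - b) (c - a)) (Rmin d1 d2)).
    pose proof (Rmin_r (Rmin (a - b) (c - a)) (Rmin d1 d2)).
    pose proof (Rmin_l (a - b) (c - a)). pose proof (Rmin_r (a - b) (c - a)).
    pose proof (Rmin_l d1 d2). pose proof (Rmin_r d1 d2).
    destruct (Rlt_or_le h 0) as [Hn|Hp].
    + rewrite Rabs_left in Hh by auto.
      rewrite (E1 (a + h)), (E1 a) by lra. apply P1; auto. rewrite Rabs_left by auto. lra.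
    + assert (0 < h) by (destruct Hp; auto; congruence). rewrite Rabs_right in Hh by lra.
      rewrite (E2 (a + h)), (E2 a) by lra. apply P2; auto. rewrite Rabs_right by lra. lra.
  - apply (is_derive_ext_loc f2); [|apply D2; lra].
    apply (locally_interval _ y (Finite a) (Finite c)); simpl; try lra.
    intros; symmetry; apply E2; lra.
Qed.

Definition Jeps' (eps p : R) : R :=
  if Rlt_dec p eps then dJ eps + ddJ eps * (p - eps)
  else if Rlt_dec (1 - eps) p then dJ (1 - eps) + ddJ (1 - eps) * (p - (1 - eps))
  else dJ p.

Section Regularisation.
Variable eps : R.
Hypothesis Heps : 0 < eps < / 2.

Lemma Jeps_left p : p <= eps -> Jeps eps p = taylor2 eps p.
Proof.
  intros Hp. unfold Jeps, taylor2. destruct (Rlt_dec p eps).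
  - rewrite Derive_Jfun, Derive_Derive_Jfun by lra. reflexivity.
  - destruct (Rlt_dec (1 - eps) p); [lra|]. replace p with eps by lra. ring.
Qed.

Lemma Jeps_mid p : eps <= p <= 1 - eps -> Jeps eps p = Jfun p.
Proof.
  intros Hp. unfold Jeps. destruct (Rlt_dec p eps); [lra|].
  destruct (Rlt_dec (1 - eps) p); [lra | reflexivity].
Qed.

Lemma Jeps_right p : 1 - eps <= p -> Jeps eps p = taylor2 (1 - eps) p.
Proof.
  intros Hp. unfold Jeps, taylor2. destruct (Rlt_dec p eps); [lra|].
  destruct (Rlt_dec (1 - eps) p).
  - rewrite Derive_Jfun, Derive_Derive_Jfun by lra. reflexivity.
  - replace p with (1 - eps) by lra. ring.
Qed.

Lemma Jeps'_left p : p <= eps -> Jeps' eps p = dJ eps + ddJ eps * (p - eps).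
Proof.
  intros Hp. unfold Jeps'. destruct (Rlt_dec p eps); auto.
  destruct (Rlt_dec (1 - eps) p); [lra|]. replace p with eps by lra. ring.
Qed.

Lemma Jeps'_mid p : eps <= p <= 1 - eps -> Jeps' eps p = dJ p.
Proof.
  intros Hp. unfold Jeps'. destruct (Rlt_dec p eps); [lra|].
  destruct (Rlt_dec (1 - eps) p); [lra | reflexivity].
Qed.

Lemma Jeps'_right p : 1 - eps <= p ->
  Jeps' eps p = dJ (1 - eps) + ddJ (1 - eps) * (p - (1 - eps)).
Proof.
  intros Hp. unfold Jeps'. destruct (Rlt_dec p eps); [lra|].
  destruct (Rlt_dec (1 - eps) p); auto. replace p with (1 - eps) by lra. ring.
Qed.

Lemma is_derive_Jeps p : is_derive (Jeps eps) p (Jeps' eps p).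
Proof.
  destruct (Rlt_or_le p (1 - eps)) as [Hp|Hp].
  - apply (is_derive_glue _ (taylor2 eps) Jfun eps (p - 1) (1 - eps)); try lra.
    + intros; apply Jeps_left; lra.
    + intros; apply Jeps_mid; lra.
    + intros; rewrite Jeps'_left by lra. apply is_derive_taylor2.
    + intros; rewrite Jeps'_mid by lra. apply is_derive_Jfun; lra.
  - apply (is_derive_glue _ Jfun (taylor2 (1 - eps)) (1 - eps) eps (p + 1)); try lra.
    + intros; apply Jeps_mid; lra.
    + intros; apply Jeps_right; lra.
    + intros; rewrite Jeps'_mid by lra. apply is_derive_Jfun; lra.
    + intros; rewrite Jeps'_right by lra. apply is_derive_taylor2.
Qed.

Lemma dJeps_eq p : dJeps eps p = Jeps' eps p.
Proof. apply is_derive_unique, is_derive_Jeps. Qed.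

Lemma Jeps'_le_compat x y : x <= y -> Jeps' eps x <= Jeps' eps y.
Proof.
  intros Hxy. pose proof (ddJ_pos eps ltac:(lra)) as Hk.
  assert (Hmono : forall a b, eps <= a -> a <= b -> b <= 1 - eps -> dJ a <= dJ b)
    by (intros; apply dJ_le_compat; lra).
  assert (Hleft : forall z, z <= eps -> Jeps' eps z <= dJ eps)
    by (intros; rewrite Jeps'_left by lra; nra).
  assert (Hright : forall z, 1 - eps <= z -> dJ (1 - eps) <= Jeps' eps z)
    by (intros; rewrite Jeps'_right, ddJ_1m by lra; nra).
  destruct (Rle_or_lt y eps) as [Hy|Hy].
  { rewrite !Jeps'_left by lra. nra. }
  destruct (Rle_or_lt x eps) as [Hx|Hx].
  { apply Rle_trans with (dJ eps); auto.
    destruct (Rle_or_lt y (1 - eps)).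
    - rewrite Jeps'_mid by lra. apply Hmono; lra.
    - apply Rle_trans with (dJ (1 - eps)); [apply Hmono | apply Hright]; lra. }
  destruct (Rle_or_lt y (1 - eps)) as [Hy'|Hy'].
  { rewrite !Jeps'_mid by lra. apply Hmono; lra. }
  destruct (Rle_or_lt (1 - eps) x) as [Hx'|Hx'].
  - rewrite !Jeps'_right, ddJ_1m by lra. nra.
  - rewrite Jeps'_mid by lra.
    apply Rle_trans with (dJ (1 - eps)); [apply Hmono | apply Hright]; lra.
Qed.

Lemma Jeps_tangent_le x y : Jeps eps x - Jeps eps y <= dJeps eps x * (x - y).
Proof.
  rewrite dJeps_eq.
  destruct (MVT_gen (Jeps eps) y x (Jeps' eps)) as [c [Hc ->]].
  - intros; apply is_derive_Jeps.
  - intros z _. apply continuity_pt_filterlim, (ex_derive_continuous (V := R_NormedModule)).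
    eexists; apply is_derive_Jeps.
  - destruct (Rle_or_lt y x).
    + rewrite Rmin_left, Rmax_right in Hc by lra.
      pose proof (Jeps'_le_compat c x ltac:(lra)). nra.
    + rewrite Rmin_right, Rmax_left in Hc by lra.
      pose proof (Jeps'_le_compat x c ltac:(lra)). nra.
Qed.

Lemma taylor2_sqr_le a y : 0 < a < 1 -> dJ a * (y - a) >= 0 ->
  (y - a) ^ 2 <= 2 * sqrt (a * (1 - a)) * taylor2 a y.
Proof.
  intros Ha Hlin. pose proof (Jfun_nonneg a Ha).
  assert (Hs : 0 < sqrt (a * (1 - a))) by (apply sqrt_lt_R0; nra).
  unfold taylor2, ddJ.
  set (s := sqrt (a * (1 - a))) in *.
  replace (2 * s * (Jfun a + dJ a * (y - a) + / 2 * / s * (y - a) ^ 2))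
    with (2 * s * (Jfun a + dJ a * (y - a)) + (y - a) ^ 2) by (field; lra).
  nra.
Qed.

Lemma Jeps_ge_left x : x <= eps -> (x - eps) ^ 2 <= 2 * sqrt (eps * (1 - eps)) * Jeps eps x.
Proof.
  intros Hx. rewrite Jeps_left by auto. apply taylor2_sqr_le; [lra|].
  assert (dJ eps <= 0) by (rewrite <- dJ_half; apply dJ_le_compat; lra). nra.
Qed.

Lemma Jeps_ge_right x : 1 - eps <= x ->
  (x - (1 - eps)) ^ 2 <= 2 * sqrt (eps * (1 - eps)) * Jeps eps x.
Proof.
  intros Hx. rewrite Jeps_right by auto.
  replace (eps * (1 - eps)) with ((1 - eps) * (1 - (1 - eps))) by ring.
  apply taylor2_sqr_le; [lra|].
  assert (0 <= dJ (1 - eps)) by (rewrite <- dJ_half; apply dJ_le_compat; lra). nra.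
Qed.

Lemma Jeps_nonneg x : 0 <= Jeps eps x.
Proof.
  assert (Hs : 0 < sqrt (eps * (1 - eps))) by (apply sqrt_lt_R0; nra).
  destruct (Rle_or_lt x eps); [pose proof (Jeps_ge_left x) | destruct (Rle_or_lt (1 - eps) x)].
  - pose proof (pow2_ge_0 (x - eps)). nra.
  - pose proof (Jeps_ge_right x). pose proof (pow2_ge_0 (x - (1 - eps))). nra.
  - rewrite Jeps_mid by lra. apply Jfun_nonneg; lra.
Qed.

Lemma Rmin_sqr_le_Jeps x : (Rmin x 0) ^ 2 <= 2 * sqrt (eps * (1 - eps)) * Jeps eps x.
Proof.
  pose proof (Jeps_nonneg x). pose proof (sqrt_pos (eps * (1 - eps))).
  unfold Rmin; destruct (Rle_dec x 0).
  - pose proof (Jeps_ge_left x). nra.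
  - nra.
Qed.

Lemma Rmax_sqr_le_Jeps x : (Rmax (x - 1) 0) ^ 2 <= 2 * sqrt (eps * (1 - eps)) * Jeps eps x.
Proof.
  pose proof (Jeps_nonneg x). pose proof (sqrt_pos (eps * (1 - eps))).
  unfold Rmax; destruct (Rle_dec (x - 1) 0).
  - nra.
  - pose proof (Jeps_ge_right x). nra.
Qed.

End Regularisation.

(** * Stability of the scheme *)

Lemma Fpot_nonneg eta a : 0 < eta -> 0 <= Fpot eta a.
Proof.
  intros He. unfold Fpot.
  assert (0 < / (4 * eta ^ 2)) by (apply Rinv_0_lt_compat; nra).
  apply Rmult_le_pos; [apply Rmult_le_pos|]; auto using pow2_ge_0; lra.
Qed.

Lemma Fpot_splitting_le eta a b : 0 < eta ->
  Fpot eta a - Fpot eta b <= (dFc eta a + dFe eta b) * (a - b).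
Proof.
  intros He. unfold Fpot, dFc, dFe.
  assert (HK : 0 < / (4 * eta ^ 2)) by (apply Rinv_0_lt_compat; nra).
  set (K := / (4 * eta ^ 2)) in *.
  assert (E : (K * (4 * a ^ 3 - 6 * a ^ 2 + 3 * a) + - K * b) * (a - b)
              - (K * a ^ 2 * (a - 1) ^ 2 - K * b ^ 2 * (b - 1) ^ 2)
              = K * (a - b) ^ 2 * ((b - a + (2 * a - 1)) ^ 2 + / 2 * (2 * a - 1) ^ 2 + / 2))
    by field.
  assert (0 <= K * (a - b) ^ 2 * ((b - a + (2 * a - 1)) ^ 2 + / 2 * (2 * a - 1) ^ 2 + / 2)).
  { apply Rmult_le_pos; [apply Rmult_le_pos; auto using pow2_ge_0; lra|].
    pose proof (pow2_ge_0 (b - a + (2 * a - 1))). pose proof (pow2_ge_0 (2 * a - 1)). lra. }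
  lra.
Qed.

Lemma cross_term_le m f g X : 0 <= m -> X ^ 2 = m * f ^ 2 ->
  - (X * g) <= / 2 * (m * g * g) + / 2 * f ^ 2.
Proof.
  intros Hm HX.
  assert (Hsq : (X * g) ^ 2 <= (/ 2 * (m * g * g) + / 2 * f ^ 2) ^ 2).
  { replace ((X * g) ^ 2) with (X ^ 2 * g ^ 2) by ring. rewrite HX.
    pose proof (pow2_ge_0 (m * g * g - f ^ 2)). nra. }
  assert (0 <= / 2 * (m * g * g) + / 2 * f ^ 2) by (pose proof (pow2_ge_0 f); nra).
  destruct (Rle_or_lt 0 (X * g)); [lra|].
  apply Rsqr_incr_0_var; [unfold Rsqr; nra | auto].
Qed.

Ltac solve_poly_on_elems :=
  solve [let e := fresh "e" in intros e; cbv beta; unfold Fpot, dFc, dFe, p1, aff; solve_poly].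

Section Scheme.
Context {d : nat} (M : smesh d) (eta eps dt : R).

Definition dissipation (phi mu : nat -> R) : R :=
  omega_int M (fun e _ => rsum d (fun c => MJ M eps phi e c * grad M mu e c * grad M mu e c)).

Definition entropy (phi : nat -> R) : R :=
  omega_int M (fun e x => p1 M (fun i => Jeps eps (phi i)) e x).

Lemma MJ_nonneg phi e c : 0 <= MJ M eps phi e c.
Proof. unfold MJ. destruct (Req_dec_T _ _); apply pow2_ge_0. Qed.

(* No property of [J_eps] is needed: the degenerate cases are absorbed by [/ 0 = 0]. *)
Lemma MJ_grad_dJeps_sqr phi e c :
  (MJ M eps phi e c * grad M (fun i => dJeps eps (phi i)) e c) ^ 2
  = MJ M eps phi e c * grad M phi e c ^ 2.
Proof.
  unfold MJ, grad, loc.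
  destruct (Req_dec_T (phi (vtx M e (S c))) (phi (vtx M e 0%nat))) as [Eq|Ne].
  - rewrite Eq. unfold Rdiv. ring.
  - destruct (Req_dec (dJeps eps (phi (vtx M e (S c)))) (dJeps eps (phi (vtx M e 0%nat))))
      as [EqJ|NeJ].
    + rewrite EqJ, Rminus_diag. unfold Rdiv. rewrite Rinv_0. ring.
    + destruct (Req_dec (step M e (S c)) 0) as [Z|Z].
      * unfold Rdiv. rewrite Z, Rinv_0. ring.
      * field. split; auto. lra.
Qed.

Lemma dissipation_nonneg phi mu : 0 <= dissipation phi mu.
Proof.
  apply omega_int_nonneg; [solve_poly_on_elems|]. intros e t _ _.
  apply rsum_nonneg; intros c _. rewrite Rmult_assoc.
  apply Rmult_le_pos; [apply MJ_nonneg | apply Rle_0_sqr].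
Qed.

Lemma lumped_comm f g : lumped M f g = lumped M g f.
Proof.
  unfold lumped. replace (fun i => f i * g i) with (fun i => g i * f i); auto.
  apply functional_extensionality; intros; ring.
Qed.

Hypothesis Heta : 0 < eta.

Lemma energy_nonneg phi : 0 <= energy M eta phi.
Proof.
  apply omega_int_nonneg; [solve_poly_on_elems|]. intros e t _ _.
  apply Rplus_le_le_0_compat; [|apply Fpot_nonneg; auto].
  apply Rmult_le_pos; [lra | apply rsum_nonneg; intros; apply pow2_ge_0].
Qed.

Hypothesis Hdt : 0 < dt.

Lemma scheme_chemical_potential phi0 phi1 mu1 psi : Jscheme M eta eps dt phi0 phi1 mu1 ->
  lumped M (fun i => phi1 i - phi0 i) psi
  = - dt * omega_int M (fun e _ =>
        rsum d (fun c => MJ M eps phi1 e c * grad M mu1 e c * grad M psi e c)).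
Proof.
  intros [Hmu _]. specialize (Hmu psi).
  apply (Rmult_eq_reg_l (/ dt)); [|apply Rinv_neq_0_compat; lra].
  replace (/ dt * (- dt * _)) with (- omega_int M (fun e _ =>
        rsum d (fun c => MJ M eps phi1 e c * grad M mu1 e c * grad M psi e c))) by (field; lra).
  lra.
Qed.

Lemma scheme_energy_le phi0 phi1 mu1 : Jscheme M eta eps dt phi0 phi1 mu1 ->
  energy M eta phi1 + dt * dissipation phi1 mu1 <= energy M eta phi0.
Proof.
  intros Hs. pose proof (scheme_chemical_potential _ _ _ mu1 Hs) as Hmu.
  destruct Hs as [_ Hphi]. specialize (Hphi (fun i => phi1 i - phi0 i)).
  rewrite lumped_comm, Hmu in Hphi. fold (dissipation phi1 mu1) in Hphi.
  enough (energy M eta phi1 <= energy M eta phi0 + (- dt * dissipation phi1 mu1)) by lra.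
  rewrite <- Hphi. unfold energy. rewrite <- !omega_int_add by solve_poly_on_elems.
  apply omega_int_le; try solve_poly_on_elems. intros e t _ _. rewrite p1_sub.
  pose proof (Fpot_splitting_le eta (p1 M phi1 e (aff M e t)) (p1 M phi0 e (aff M e t)) Heta).
  assert (/ 2 * rsum d (fun c => grad M phi1 e c ^ 2) <=
          / 2 * rsum d (fun c => grad M phi0 e c ^ 2) +
          rsum d (fun c => grad M phi1 e c * grad M (fun i => phi1 i - phi0 i) e c)).
  { rewrite <- !rsum_scal, <- rsum_add. apply rsum_le; intros c _. rewrite grad_sub.
    pose proof (pow2_ge_0 (grad M phi1 e c - grad M phi0 e c)). nra. }
  lra.
Qed.

Hypotheses (HM : valid_mesh M) (Heps : 0 < eps < / 2).

Lemma scheme_entropy_le phi0 phi1 mu1 : Jscheme M eta eps dt phi0 phi1 mu1 ->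
  entropy phi1 <= entropy phi0 + dt * (/ 2 * dissipation phi1 mu1 + energy M eta phi1).
Proof.
  intros Hs. set (psi := fun i => dJeps eps (phi1 i)).
  pose proof (scheme_chemical_potential _ _ _ psi Hs) as Hmu.
  set (b := omega_int M (fun e _ =>
              rsum d (fun c => MJ M eps phi1 e c * grad M mu1 e c * grad M psi e c))) in Hmu.
  assert (Hconv : entropy phi1 <= entropy phi0 + lumped M (fun i => phi1 i - phi0 i) psi).
  { unfold entropy, lumped. rewrite <- omega_int_add by solve_poly_on_elems.
    apply omega_int_le; try solve_poly_on_elems. intros e t He Ht.
    rewrite <- p1_add. apply p1_le; auto. intros i.
    pose proof (Jeps_tangent_le eps Heps (phi1 i) (phi0 i)). unfold psi. lra. }
  set (G := omega_int M (fun e _ => rsum d (fun c => grad M phi1 e c ^ 2))).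
  assert (Hcross : 0 <= / 2 * dissipation phi1 mu1 + / 2 * G + b).
  { unfold dissipation, G, b.
    rewrite <- !omega_int_scal, <- !omega_int_add by solve_poly_on_elems.
    apply omega_int_nonneg; [solve_poly_on_elems|]. intros e t _ _. cbv beta.
    rewrite <- !rsum_scal, <- !rsum_add. apply rsum_nonneg; intros c _.
    pose proof (cross_term_le _ _ (grad M mu1 e c) _ (MJ_nonneg phi1 e c)
                  (MJ_grad_dJeps_sqr phi1 e c)).
    unfold psi. nra. }
  assert (HG : G <= 2 * energy M eta phi1).
  { unfold G, energy. rewrite <- omega_int_scal by solve_poly_on_elems.
    apply omega_int_le; try solve_poly_on_elems. intros e t _ _.
    pose proof (Fpot_nonneg eta (p1 M phi1 e (aff M e t)) Heta). lra. }
  rewrite Hmu in Hconv.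
  assert (dt * (- b) <= dt * (/ 2 * dissipation phi1 mu1 + energy M eta phi1))
    by (apply Rmult_le_compat_l; lra).
  lra.
Qed.

Lemma scheme_step_le phi0 phi1 mu1 : Jscheme M eta eps dt phi0 phi1 mu1 ->
  entropy phi1 + / 2 * energy M eta phi1
  <= entropy phi0 + / 2 * energy M eta phi0 + dt * energy M eta phi1.
Proof.
  intros Hs. pose proof (scheme_energy_le _ _ _ Hs). pose proof (scheme_entropy_le _ _ _ Hs).
  lra.
Qed.

Lemma scheme_entropy_bound (phi mu : nat -> nat -> R) n :
  (forall k, (k <= n)%nat -> Jscheme M eta eps dt (phi k) (phi (S k)) (mu (S k))) ->
  entropy (phi (S n)) <= entropy (phi O) + (/ 2 + INR (S n) * dt) * energy M eta (phi O).
Proof.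
  intros Hs. set (E0 := energy M eta (phi O)).
  assert (Hinv : forall k, (k <= S n)%nat ->
            entropy (phi k) + / 2 * energy M eta (phi k)
              <= entropy (phi O) + (/ 2 + INR k * dt) * E0
            /\ energy M eta (phi k) <= E0).
  { induction k as [|k IH]; intros Hk; [simpl; unfold E0; lra|].
    destruct IH as [Hent Hen]; [lia|].
    pose proof (Hs k ltac:(lia)) as Hsk.
    pose proof (scheme_step_le _ _ _ Hsk).
    pose proof (scheme_energy_le _ _ _ Hsk). pose proof (dissipation_nonneg (phi (S k)) (mu (S k))).
    assert (Hdec : energy M eta (phi (S k)) <= E0) by nra.
    split; [|auto]. rewrite S_INR.
    assert (dt * energy M eta (phi (S k)) <= dt * E0) by (apply Rmult_le_compat_l; lra).
    lra. }
  destruct (Hinv (S n) (le_n _)) as [Hent _].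
  pose proof (energy_nonneg (phi (S n))). lra.
Qed.

Lemma Rmin_sqr_le_entropy phi :
  omega_int M (fun e x => (p1 M (fun i => Rmin (phi i) 0) e x) ^ 2)
  <= 2 * sqrt (eps * (1 - eps)) * entropy phi.
Proof.
  unfold entropy. rewrite <- omega_int_scal by solve_poly_on_elems.
  apply omega_int_le; try solve_poly_on_elems. intros e t He Ht.
  eapply Rle_trans; [apply p1_sqr_le; auto|].
  rewrite <- p1_scal. apply p1_le; auto. intros i. apply Rmin_sqr_le_Jeps; auto.
Qed.

Lemma Rmax_sqr_le_entropy phi :
  omega_int M (fun e x => (p1 M (fun i => Rmax (phi i - 1) 0) e x) ^ 2)
  <= 2 * sqrt (eps * (1 - eps)) * entropy phi.
Proof.
  unfold entropy. rewrite <- omega_int_scal by solve_poly_on_elems.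
  apply omega_int_le; try solve_poly_on_elems. intros e t He Ht.
  eapply Rle_trans; [apply p1_sqr_le; auto|].
  rewrite <- p1_scal. apply p1_le; auto. intros i. apply Rmax_sqr_le_Jeps; auto.
Qed.

End Scheme.

Theorem corollary2 :
  forall (d : nat) (eta T : R),
    (1 <= d <= 3)%nat -> 0 < eta -> 0 < T ->
    exists Cf : R -> R -> R,
      forall (M : smesh d) (N : nat) (eps : R) (phi mu : nat -> nat -> R) (n : nat),
        valid_mesh M ->
        (0 < N)%nat -> (n < N)%nat ->
        0 < eps < / 2 ->
        (forall k, (k <= n)%nat ->
           Jscheme M eta eps (T / INR N) (phi k) (phi (S k)) (mu (S k))) ->
        let C := Cf (energy M eta (phi O))
                    (omega_int M (fun e x => p1 M (fun i => Jeps eps (phi O i)) e x)) in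
        omega_int M (fun e x => (p1 M (fun i => Rmin (phi (S n) i) 0) e x) ^ 2)
          <= C * sqrt (eps * (1 - eps)) /\
        omega_int M (fun e x => (p1 M (fun i => Rmax (phi (S n) i - 1) 0) e x) ^ 2)
          <= C * sqrt (eps * (1 - eps)) /\
        C * sqrt (eps * (1 - eps)) <= C * sqrt eps.
Proof.
  (* The argument works in every dimension. *)
  intros d eta T _ Heta HT.
  exists (fun E S => 2 * (Rabs S + (/ 2 + T) * Rabs E)).
  intros M N eps phi mu n HM HN Hn Heps Hs. cbv zeta.
  assert (HNpos : 0 < INR N) by (apply lt_0_INR; lia).
  set (dt := T / INR N) in Hs.
  assert (Hdt : 0 < dt) by (apply Rdiv_lt_0_compat; auto).
  assert (Htime : INR (S n) * dt <= T).
  { assert (INR (S n) <= INR N) by (apply le_INR; lia).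
    apply Rle_trans with (INR N * dt); [apply Rmult_le_compat_r; lra|].
    unfold dt. right. field. lra. }
  pose proof (scheme_entropy_bound M eta eps dt Heta Hdt HM Heps phi mu n Hs) as Hent.
  pose proof (energy_nonneg M eta Heta (phi O)).
  set (E0 := energy M eta (phi O)) in *. set (S0 := entropy M eps (phi O)) in *.
  assert (Hbound : entropy M eps (phi (S n)) <= Rabs S0 + (/ 2 + T) * Rabs E0).
  { rewrite (Rabs_right E0) by lra. pose proof (Rle_abs S0).
    assert (INR (S n) * dt * E0 <= T * E0) by (apply Rmult_le_compat_r; lra). nra. }
  pose proof (sqrt_pos (eps * (1 - eps))).
  pose proof (Rmin_sqr_le_entropy M eps HM Heps (phi (S n))).
  pose proof (Rmax_sqr_le_entropy M eps HM Heps (phi (S n))).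
  fold (entropy M eps (phi O)) S0.
  assert (HC : 0 <= 2 * (Rabs S0 + (/ 2 + T) * Rabs E0))
    by (pose proof (Rabs_pos S0); pose proof (Rabs_pos E0); nra).
  split; [|split]; [nra | nra |].
  apply Rmult_le_compat_l; auto. apply sqrt_le_1_alt. nra.
Qed.
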